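(* Let $d$ be a positive integer and $I$ a nonzero square free monomial ideal of $S=K[x_1,\ldots,x_n]$ generated in degrees $\geq d$ with $\rho_d(I)>0$. The following are equivalent: (1) $\operatorname{sdepth}_S I=d$; (2) there exist square free monomials of degree $d$ in $I$ which generate an ideal $I'$ with $\rho_d(I')>\rho_{d+1}(I')$.
   Context: $K$ is a field; for a monomial ideal $L$, $\rho_k(L)$ denotes the number of square free monomials of degree $k$ belonging to $L$. Stanley depth: let $P_{I}$ be the (finite) poset of all square free monomials in $I$, ordered by divisibility. For a partition $\mathcal P$ of $P_{I}$ into disjoint intervals $[u_i,v_i]=\{w\in P_{I}: u_i\mid w,\ w\mid v_i\}$, set $\operatorname{sdepth}\mathcal P=\min_i\deg v_i$; then $\operatorname{sdepth}_S I=\max_{\mathcal P}\operatorname{sdepth}\mathcal P$, the maximum over all such partitions. *)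

From mathcomp Require Import all_boot.
Set Implicit Arguments. Unset Strict Implicit. Unset Printing Implicit Defensive.

(* A square free monomial x_{i1}...x_{ik} of S = K[x_1..x_n] is identified
   with its support, a subset of 'I_n; its degree is the cardinality.
   A square free monomial ideal I is represented by the set P_I of the
   square free monomials it contains (which determines I). *)

Definition sqmon (n : nat) := {set 'I_n}.

(* P is the set of square free monomials of a square free monomial ideal:
   closed under multiplication by monomials, i.e. upward closed. *)
Definition sqfree_ideal (n : nat) (P : {set sqmon n}) : Prop :=
  forall u w : sqmon n, u \in P -> u \subset w -> w \in P.

Definition gen_ideal (n : nat) (G : {set sqmon n}) : {set sqmon n} :=
  [set w : sqmon n | [exists u in G, u \subset w]].

Definition rho (n : nat) (k : nat) (P : {set sqmon n}) : nat :=
  #|[set w in P | #|w| == k]|.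

Definition intv (n : nat) (P : {set sqmon n}) (u v : sqmon n) : {set sqmon n} :=
  [set w in P | (u \subset w) && (w \subset v)].

Definition interval_partition (n : nat) (P : {set sqmon n})
    (Q : {set sqmon n * sqmon n}) : bool :=
  [forall p in Q, [&& p.1 \in P, p.2 \in P & p.1 \subset p.2]] &&
  [forall w in P, [exists p in Q, w \in intv P p.1 p.2]] &&
  [forall p in Q, forall q in Q,
      (p != q) ==> [disjoint intv P p.1 p.2 & intv P q.1 q.2]].

(* sdepth of a partition: min_i deg v_i (intervals have degree <= n) *)
Definition sdepth_part (n : nat) (Q : {set sqmon n * sqmon n}) : nat :=
  \big[minn/n]_(p in Q) #|p.2|.

Definition sdepth (n : nat) (P : {set sqmon n}) : nat :=
  \max_(Q : {set sqmon n * sqmon n} | interval_partition P Q) sdepth_part Q.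

From mathcomp Require Import all_boot zify.
From mathcomp Require Import order.
Set Implicit Arguments. Unset Strict Implicit. Unset Printing Implicit Defensive.

(* Stanley depth of a square free monomial ideal I generated in degrees >= d
   with rho_d(I) > 0.  Always sdepth I >= d (partition P_I into singletons),
   so sdepth I = d fails exactly when sdepth I >= d + 1.  We show:

   - sdepth I >= d + 1 iff there is an injective map f from the degree-d
     monomials w of I to degree-(d+1) monomials of I with w | f w:
     from a partition with all tops of degree > d, send the bottom w of its
     interval to w times a variable of the top; conversely the intervals
     [w, f w] together with the singletons of the monomials missed by f
     form a partition with sdepth >= d + 1;
   - by Hall's marriage theorem such an f exists iff every set G of
     degree-d monomials of I has at least #|G| upper neighbours, and these
     neighbours are the degree-(d+1) monomials of the ideal generated by G,
     i.e. #|G| = rho_d(G) <= rho_{d+1}(G). *)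

Section Hall.

Variables T U : finType.
Implicit Types (R : T -> U -> bool) (A B : {set T}) (N : {set U}).

Definition nbhd R B : {set U} := [set y | [exists x in B, R x y]].

Lemma nbhdP R B y : reflect (exists2 x, x \in B & R x y) (y \in nbhd R B).
Proof.
rewrite inE; apply: (iffP existsP) => [[x /andP[]] | [x xB Rxy]]; first by exists x.
by exists x; rewrite xB.
Qed.

Definition matching R A (f : T -> U) : Prop :=
  {in A, forall x, R x (f x)} /\ {in A &, injective f}.

Definition hall_cond R A : Prop := forall B, B \subset A -> #|B| <= #|nbhd R B|.

Definition avoid R N (x : T) (y : U) : bool := R x y && (y \notin N).

(* Hall's condition is necessary: a matching injects B into its neighbours. *)
Lemma matching_hall R A f : matching R A f -> hall_cond R A.
Proof.
move=> [Rf injf] B sBA.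
have injB : {in B &, injective f}.
  by move=> x x' xB x'B; apply: injf; apply: (subsetP sBA).
rewrite -(card_in_imset injB); apply: subset_leq_card; apply/subsetP => y.
by case/imsetP => x xB ->; apply/nbhdP; exists x => //; apply/Rf/(subsetP sBA).
Qed.

Lemma hall_condS R A A' : A' \subset A -> hall_cond R A -> hall_cond R A'.
Proof. by move=> sA'A hH B sBA'; apply/hH/(subset_trans sBA'). Qed.

Lemma hall_cond_dec R A :
  hall_cond R A \/ exists2 B : {set T}, B \subset A & #|nbhd R B| < #|B|.
Proof.
case: (boolP [forall B : {set T}, (B \subset A) ==> (#|B| <= #|nbhd R B|)]).
  by move/forallP => hH; left => B sBA; apply: (implyP (hH B)).
rewrite negb_forall => /existsP [B]; rewrite negb_imply -ltnNge => /andP [sBA lt].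
by right; exists B.
Qed.

Lemma matching_glue R A B N f1 f2 :
  B \subset A -> matching R B f1 -> {in B, forall x, f1 x \in N} ->
  matching (avoid R N) (A :\: B) f2 ->
  exists f, matching R A f.
Proof.
move=> sBA [Rf1 inj1] f1N [Rf2 inj2].
have f2N x : x \in A -> x \notin B -> R x (f2 x) && (f2 x \notin N).
  by move=> xA xB; apply: Rf2; rewrite inE xB.
exists (fun x => if x \in B then f1 x else f2 x); split.
  by move=> x xA; case: ifPn => xB; [apply: Rf1 | case/andP: (f2N x xA xB)].
move=> x x' xA x'A /=; case: ifPn => xB; case: ifPn => x'B.
- exact: inj1.
- by move=> e; case/andP: (f2N x' x'A x'B); rewrite -e f1N.
- by move=> e; case/andP: (f2N x xA xB); rewrite e f1N.
- by apply: inj2; rewrite inE ?xB ?x'B.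
Qed.

Lemma hall_cond_critical R A B :
  hall_cond R A -> B \subset A -> #|nbhd R B| <= #|B| ->
  hall_cond (avoid R (nbhd R B)) (A :\: B).
Proof.
move=> hH sBA critB C sC.
have CB0 : C :&: B = set0.
  apply/setP => x; rewrite !inE; apply/andP => [[xC xB]].
  by move: (subsetP sC x xC); rewrite inE xB.
have sCBA : C :|: B \subset A by rewrite subUset sBA (subset_trans sC (subsetDl A B)).
have nbCB : nbhd R (C :|: B) \subset nbhd (avoid R (nbhd R B)) C :|: nbhd R B.
  apply/subsetP => y /nbhdP [x]; rewrite in_setU => xCB Rxy; rewrite in_setU.
  case: (boolP (y \in nbhd R B)) => yB; first by rewrite orbT.
  case/orP: xCB => xC; last by case/negP: yB; apply/nbhdP; exists x.
  by apply/orP; left; apply/nbhdP; exists x; rewrite // /avoid Rxy yB.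
have := hH _ sCBA; have := cardsUI C B; rewrite CB0 cards0.
have := subset_leq_card nbCB; have := cardsUI (nbhd (avoid R (nbhd R B)) C) (nbhd R B).
lia.
Qed.

Lemma hall_cond_surplus R A x y :
  (forall B, B \subset A -> B != set0 -> B != A -> #|B| < #|nbhd R B|) ->
  x \in A -> hall_cond (avoid R [set y]) (A :\ x).
Proof.
move=> surplus xA C sC; have [-> | [z zC]] := set_0Vmem C; first by rewrite cards0.
have sCA : C \subset A := subset_trans sC (subD1set A x).
have CA : C != A.
  by apply/eqP => eCA; move: (subsetP sC x); rewrite eCA !inE eqxx => /(_ xA).
have C0 : C != set0 by apply/set0Pn; exists z.
have nbC : nbhd R C \subset y |: nbhd (avoid R [set y]) C.
  apply/subsetP => b /nbhdP [a aC Rab]; rewrite in_setU1.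
  case: eqP => //= /eqP bny; apply/nbhdP; exists a => //.
  by rewrite /avoid Rab inE bny.
have := surplus C sCA C0 CA; have := subset_leq_card nbC; rewrite cardsU1; lia.
Qed.

(* Hall's marriage theorem, by strong induction on #|A|: split along a
   critical subset if there is one, otherwise match one vertex greedily. *)
Theorem hall (y0 : U) R A : hall_cond R A -> exists f, matching R A f.
Proof.
elim: {A}_.+1 {-2}A (ltnSn #|A|) R => // m IH A hA R hH.
have [A0 | [x xA]] := set_0Vmem A.
  by exists (fun=> y0); rewrite A0; split => [z|z]; rewrite inE.
case: (boolP [exists B : {set T},
                [&& B \subset A, B != set0, B != A & #|nbhd R B| <= #|B|]]).
- case/existsP => B /and4P [sBA B0 BA critB].
  have ltBA : #|B| < #|A| by apply: proper_card; rewrite properEneq BA sBA.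
  have [f1 mf1] := IH B (leq_trans ltBA hA) R (hall_condS sBA hH).
  have ltA'A : #|A :\: B| < #|A|.
    by rewrite cardsD (setIidPr sBA); move: B0; rewrite -card_gt0; lia.
  have [f2 mf2] := IH _ (leq_trans ltA'A hA) _ (hall_cond_critical hH sBA critB).
  apply: (matching_glue sBA mf1 _ mf2) => z zB.
  by apply/nbhdP; exists z => //; apply: mf1.1.
- rewrite negb_exists => /forallP noncrit.
  have surplus B : B \subset A -> B != set0 -> B != A -> #|B| < #|nbhd R B|.
    by move=> sBA B0 BA; move: (noncrit B); rewrite sBA B0 BA ltnNge.
  have sxA : [set x] \subset A by rewrite sub1set.
  have /card_gt0P [y /nbhdP [x']] : 0 < #|nbhd R [set x]|.
    by have := hH _ sxA; rewrite cards1.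
  rewrite inE => /eqP -> Rxy.
  have ltA'A : #|A :\ x| < #|A| by rewrite (cardsD1 x A) xA.
  have [f2 mf2] := IH _ (leq_trans ltA'A hA) _ (hall_cond_surplus y surplus xA).
  have mx : matching R [set x] (fun=> y).
    by split=> [z | z z']; rewrite !inE => /eqP -> //= /eqP ->.
  by apply: (matching_glue sxA mx _ mf2) => z _; rewrite set11.
Qed.

Lemma matching_of_unique_preimage (y0 : U) R A :
  {in A, forall x, exists y, R x y} ->
  (forall x x' y, x \in A -> x' \in A -> R x y -> R x' y -> x = x') ->
  exists f, matching R A f.
Proof.
move=> hex huniq.
have pickR x : x \in A -> R x (odflt y0 [pick y | R x y]).
  by move=> xA; case: pickP => [//| none]; have [y Rxy] := hex x xA; rewrite none in Rxy.
exists (fun x => odflt y0 [pick y | R x y]); split => // x x' xA x'A e.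
by apply: (huniq _ _ _ xA x'A (pickR x xA)); rewrite e; apply: pickR.
Qed.

End Hall.

Lemma bigmin_leq (X : finType) (m : nat) (Q : {set X}) (F : X -> nat) p :
  p \in Q -> \big[minn/m]_(q in Q) F q <= F p.
Proof.
move=> pQ; rewrite -minEnat.
exact: (@Order.TotalTheory.bigmin_le_cond _ nat X m p (mem Q) F pQ).
Qed.

Lemma leq_bigmin (X : finType) (m : nat) (Q : {set X}) (F : X -> nat) k :
  k <= m -> (forall p, p \in Q -> k <= F p) -> k <= \big[minn/m]_(q in Q) F q.
Proof.
move=> km hF; apply: (big_ind (fun x => k <= x)) => // x y kx ky.
by rewrite leq_min kx ky.
Qed.

Section IntervalPartitions.

Variable n : nat.
Implicit Types (P I G K : {set sqmon n}) (Q : {set sqmon n * sqmon n}).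

Lemma card_sqmon (u : sqmon n) : #|u| <= n.
Proof. by rewrite -[X in _ <= X]card_ord max_card. Qed.

Lemma interval_partitionP P Q :
  reflect [/\ forall p, p \in Q -> [&& p.1 \in P, p.2 \in P & p.1 \subset p.2],
              forall w, w \in P -> exists2 p, p \in Q & w \in intv P p.1 p.2
            & forall p q w, p \in Q -> q \in Q ->
                w \in intv P p.1 p.2 -> w \in intv P q.1 q.2 -> p = q]
          (interval_partition P Q).
Proof.
apply: (iffP idP).
  case/andP => [/andP [/forallP hpair /forallP hcov] /forallP hdisj]; split.
  - by move=> p; apply/implyP/hpair.
  - by move=> w /(implyP (hcov w)) /existsP [p /andP [pQ wp]]; exists p.
  - move=> p q w pQ qQ wp wq; apply/eqP/negP => /negP pq.
    have /forallP /(_ q) := implyP (hdisj p) pQ; rewrite qQ pq /= => dis.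
    by move: (disjointFr dis wp); rewrite wq.
case=> hpair hcov hdisj; apply/andP; split; first (apply/andP; split).
- by apply/forallP => p; apply/implyP/hpair.
- apply/forallP => w; apply/implyP => /hcov [p pQ wp].
  by apply/existsP; exists p; rewrite pQ.
- apply/forallP => p; apply/implyP => pQ; apply/forallP => q; apply/implyP => qQ.
  apply/implyP => pq; rewrite -setI_eq0; apply/eqP/setP => w; rewrite !inE.
  apply/negbTE/negP => /andP [wp wq].
  by move: pq; rewrite (hdisj p q w pQ qQ) ?eqxx // !inE.
Qed.

Lemma sdepth_part_leq Q p : p \in Q -> sdepth_part Q <= #|p.2|.
Proof. exact: bigmin_leq. Qed.

Lemma sdepth_ge_part P Q : interval_partition P Q -> sdepth_part Q <= sdepth P.
Proof. exact: leq_bigmax_cond. Qed.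

Lemma partition_of_sdepth P k :
  k < sdepth P -> exists2 Q, interval_partition P Q & k < sdepth_part Q.
Proof.
move=> lt; case: (pickP (fun Q => interval_partition P Q && (k < sdepth_part Q))).
  by move=> Q /andP [pQ ltQ]; exists Q.
move=> none; suff : sdepth P <= k by rewrite leqNgt lt.
by apply/bigmax_leqP => Q pQ; move: (none Q); rewrite pQ /= ltnNge => /negbFE.
Qed.

Lemma short_interval (T : finType) (u t v : {set T}) :
  u \subset t -> t \subset v -> #|v| <= #|u|.+1 -> t = u \/ t = v.
Proof.
move=> ut tv short; have := subset_leq_card ut; have := subset_leq_card tv.
case: (ltngtP #|t| #|u|) => [lt | gt | teq] c1 c2; first lia.
  by right; apply/eqP; rewrite eqEcard tv; lia.
by left; apply/eqP; rewrite eq_sym eqEcard ut teq leqnn.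
Qed.

Definition key_pairs K (g : sqmon n -> sqmon n) : {set sqmon n * sqmon n} :=
  [set (w, g w) | w in K].

Lemma key_pairs_partition I K (g : sqmon n -> sqmon n) :
  K \subset I ->
  {in K, forall w, [/\ g w \in I, w \subset g w & #|g w| <= #|w|.+1]} ->
  {in I, forall t, t \in K \/ exists2 w, w \in K & t = g w} ->
  {in K &, injective g} ->
  {in K &, forall w w', w = g w' -> w = w'} ->
  interval_partition I (key_pairs K g).
Proof.
move=> sKI hg hcov hinj hkey.
have two w t : w \in K -> t \in intv I w (g w) -> t = w \/ t = g w.
  move=> wK; rewrite inE => /and3P [_ wt tg].
  by have [_ _ deg] := hg w wK; apply: short_interval wt tg deg.
apply/interval_partitionP; split.
- move=> p /imsetP [w wK ->] /=; have [-> wg _] := hg w wK.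
  by rewrite (subsetP sKI w wK).
- move=> t tI; case: (hcov t tI) => [tK | [w wK ->]].
    exists (t, g t); first by rewrite imset_f.
    by have [_ tg _] := hg t tK; rewrite inE tI subxx.
  exists (w, g w); first by rewrite imset_f.
  by have [gI wg _] := hg w wK; rewrite inE gI wg subxx.
- move=> p q t /imsetP [w wK ->] /imsetP [w' w'K ->] /= tw tw'.
  suff -> : w = w' by [].
  case: (two w t wK tw) => e1; case: (two w' t w'K tw') => e2; rewrite e1 in e2.
  + by [].
  + exact: hkey.
  + exact/esym/hkey/esym.
  + exact: hinj.
Qed.

Section GeneratedInDegreeD.

Variables (d : nat) (I : {set sqmon n}).
Hypothesis hI : sqfree_ideal I.
Hypothesis hdeg : forall u : sqmon n, u \in I -> d <= #|u|.

Definition layer k P : {set sqmon n} := [set w in P | #|w| == k].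

Lemma subset_layerP G :
  G \subset layer d I <-> G \subset I /\ {in G, forall u : sqmon n, #|u| = d}.
Proof.
split=> [sG | [sGI Gd]]; last first.
  by apply/subsetP => u uG; rewrite inE (subsetP sGI u uG) (Gd u uG) eqxx.
split; first by apply: subset_trans sG _; apply/subsetP => u; rewrite inE => /andP [].
by move=> u /(subsetP sG); rewrite inE => /andP [_ /eqP].
Qed.

Definition step_up (w v : sqmon n) : bool := [&& v \in I, #|v| == d.+1 & w \subset v].

(* Singletons partition I, so sdepth I is at least the initial degree d. *)
Lemma sdepth_ge_initial_degree : d <= n -> d <= sdepth I.
Proof.
move=> dn; have part : interval_partition I (key_pairs I id).
  by apply: key_pairs_partition => // t tI; left.
apply: leq_trans (sdepth_ge_part part).
by apply: leq_bigmin => // p /imsetP [w wI ->]; apply: hdeg.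
Qed.

(* A partition with all tops of degree > d matches each degree-d monomial w
   (the bottom of its interval) with w times a variable of its top. *)
Lemma matching_of_partition Q :
  interval_partition I Q -> d < sdepth_part Q ->
  exists f, matching step_up (layer d I) f.
Proof.
case/interval_partitionP => hpair hcov hdisj ltQ.
pose inblock w v := [exists p in Q, (p.1 == w) && (v \in intv I p.1 p.2)].
suff [f [Rf injf]] :
    exists f, matching (fun w v => step_up w v && inblock w v) (layer d I) f.
  by exists f; split => // w wD; case/andP: (Rf w wD).
apply: (matching_of_unique_preimage set0).
  move=> w; rewrite inE => /andP [wI /eqP wd].
  have [p pQ] := hcov w wI; rewrite inE => /and3P [_ p1w wp2].
  have /and3P [p1I _ _] := hpair p pQ.
  have ep1 : p.1 = w by apply/eqP; rewrite eqEcard p1w wd hdeg.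
  have : w \proper p.2.
    by rewrite properEcard wp2 wd; apply: leq_trans ltQ (sdepth_part_leq pQ).
  case/properP => _ [x xp2 xw]; exists (x |: w).
  have wxw : w \subset x |: w by apply: subsetUr.
  have xwI : x |: w \in I by apply: hI wxw.
  rewrite /step_up /inblock xwI cardsU1 xw wd wxw add1n eqxx /=; apply/existsP; exists p.
  by rewrite pQ ep1 eqxx inE xwI wxw subUset sub1set xp2 wp2.
move=> w w' v _ _ /andP [_ /existsP [p /and3P [pQ /eqP <- vp]]].
case/andP => _ /existsP [p' /and3P [p'Q /eqP <- vp']].
by rewrite (hdisj p p' v pQ p'Q vp vp').
Qed.

Section FromMatching.

Variable f : sqmon n -> sqmon n.
Hypothesis mf : matching step_up (layer d I) f.

(* Keys: monomials of I not hit by f; each key of degree d is paired with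
   its image under f, every other key with itself. *)
Let keys := I :\: f @: layer d I.
Let pair_top (w : sqmon n) := if #|w| == d then f w else w.

Let image_degree (w : sqmon n) :
  w \in I -> #|w| = d -> [/\ f w \in I, #|f w| = d.+1 & w \subset f w].
Proof.
move=> wI wd; have wD : w \in layer d I by rewrite inE wI wd eqxx.
by have /and3P [-> /eqP -> ->] := mf.1 w wD.
Qed.

Let keyI (w : sqmon n) : w \in keys -> w \in I.
Proof. by rewrite inE => /andP []. Qed.

Let keyD (w : sqmon n) : w \in keys -> #|w| = d -> w \in layer d I.
Proof. by move=> wK wd; rewrite inE (keyI wK) wd eqxx. Qed.

Let key_not_image (w w' : sqmon n) :
  w \in keys -> w' \in keys -> #|w'| = d -> w = f w' -> False.
Proof.
move=> wK w'K w'd ew; move: wK; rewrite inE => /andP [wN _].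
by move: wN; rewrite ew (imset_f f (keyD w'K w'd)).
Qed.

Lemma matching_partition : interval_partition I (key_pairs keys pair_top).
Proof.
apply: key_pairs_partition; first exact: subsetDl.
- move=> w wK; rewrite /pair_top; case: eqP => [wd | _]; last by rewrite keyI ?subxx.
  by have [fI fd wf] := image_degree (keyI wK) wd; rewrite fI wf fd wd.
- move=> t tI; case: (boolP (t \in f @: layer d I)) => [/imsetP [w wD ->] | tN].
    move: (wD); rewrite inE => /andP [wI /eqP wd]; right; exists w.
      rewrite inE wI andbT; apply/imsetP => [[w' w'D ew]].
      move: w'D; rewrite inE => /andP [w'I /eqP w'd].
      by have [_ fd _] := image_degree w'I w'd; move: wd; rewrite ew fd; lia.
    by rewrite /pair_top wd eqxx.
  by left; rewrite inE tN tI.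
- move=> w w' wK w'K; rewrite /pair_top.
  case: eqP => [wd | _]; case: eqP => [w'd | _] e //.
  + exact: mf.2 (keyD wK wd) (keyD w'K w'd) e.
  + by case: (key_not_image w'K wK wd (esym e)).
  + by case: (key_not_image wK w'K w'd e).
- move=> w w' wK w'K; rewrite /pair_top; case: eqP => // w'd ew.
  by case: (key_not_image wK w'K w'd ew).
Qed.

(* All tops have degree > d: f raises degree-d keys, and the other keys of I
   already have degree > d. *)
Lemma sdepth_of_matching : d < n -> d < sdepth I.
Proof.
move=> dn; apply: leq_trans (sdepth_ge_part matching_partition).
apply: leq_bigmin => // p /imsetP [w wK ->] /=; rewrite /pair_top.
have := hdeg (keyI wK); case: eqP => [wd _ | /eqP wd]; last by rewrite ltn_neqAle eq_sym wd.
by have [_ -> _] := image_degree (keyI wK) wd.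
Qed.

End FromMatching.

Lemma rho_gen_ideal G :
  G \subset layer d I ->
  rho d (gen_ideal G) = #|G| /\ rho d.+1 (gen_ideal G) = #|nbhd step_up G|.
Proof.
move=> sG; have Gdeg u : u \in G -> u \in I /\ #|u| = d.
  by move/(subsetP sG); rewrite inE => /andP [? /eqP].
split; apply: eq_card => w; rewrite !inE.
  apply/andP/idP => [[/existsP [u /andP [uG uw]] /eqP wd] | wG].
    have [_ ud] := Gdeg u uG.
    by have /eqP <- : u == w by rewrite eqEcard uw wd ud leqnn.
  have [_ wd] := Gdeg w wG; rewrite wd; split => //.
  by apply/existsP; exists w; rewrite wG subxx.
apply/andP/existsP => [[/existsP [u /andP [uG uw]] wd] | [u /andP [uG /and3P [_ wd uw]]]].
  by exists u; rewrite uG /step_up wd uw (hI (Gdeg u uG).1 uw).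
by split=> //; apply/existsP; exists u; rewrite uG.
Qed.

End GeneratedInDegreeD.

End IntervalPartitions.

Theorem corollary4p2 (n d : nat) (I : {set sqmon n})
  (hd : 0 < d)
  (hI : sqfree_ideal I)
  (hnz : I != set0)
  (hdeg : forall u : sqmon n, u \in I -> d <= #|u|)
  (hrho : 0 < rho d I) :
  sdepth I = d <->
  exists G : {set sqmon n},
    G \subset I /\ (forall u : sqmon n, u \in G -> #|u| = d) /\
    rho d.+1 (gen_ideal G) < rho d (gen_ideal G).
Proof.
have [w0 w0D] : exists w0, w0 \in layer d I by apply/set0Pn; rewrite -card_gt0.
split=> [hs | [G [sGI [Gd bad]]]].
- case: (hall_cond_dec (step_up d I) (layer d I)) => [hall_ok | [G sG lt]].
    have [f mf] := hall set0 hall_ok.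
    have /and3P [_ /eqP fd _] := mf.1 w0 w0D.
    have dn : d < n by rewrite -fd card_sqmon.
    by have := sdepth_of_matching hdeg mf dn; rewrite hs ltnn.
  have [sGI Gd] := (subset_layerP d I G).1 sG.
  by exists G; have [-> ->] := rho_gen_ideal hI sG.
- have sG : G \subset layer d I by apply/subset_layerP.
  have dn : d <= n by move: w0D; rewrite inE => /andP [_ /eqP <-]; apply: card_sqmon.
  apply/eqP; rewrite eqn_leq sdepth_ge_initial_degree // andbT leqNgt.
  apply/negP => /partition_of_sdepth [Q pQ ltQ].
  have [f mf] := matching_of_partition hI hdeg pQ ltQ.
  move: bad; have [-> ->] := rho_gen_ideal hI sG.
  by rewrite ltnNge (matching_hall mf sG).
Qed.
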